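(* There exist absolute constants $c, C > 0$ and $m_0$ such that the following holds for every integer $m \geq m_0$. Let $s = \lceil \log_2 m \rceil + 2$, $k = m^2 s$ and $n = km$. Partition $[n]$ into blocks $B_1,\ldots,B_m$ with $|B_i| = k$, choose $T_i \subset B_i$ with $|T_i| = s$, put $T = \bigcup_i T_i$, and let $\mathcal{F} \subset \mathcal{P}([n])$ be the union-closed family generated by $\{B_i \cup \{t\} : i \in [m],\ t \in T\}$. Then both $\mathrm{AOD}(\mathcal{F})$ and the average abundance $\mathbb{E}_{x \in [n]}[\gamma_x] = \frac1n\sum_{x\in[n]}\gamma_x$ lie between $c\,\frac{\log_2\log_2|\mathcal{F}|}{\log_2|\mathcal{F}|}$ and $C\,\frac{\log_2\log_2|\mathcal{F}|}{\log_2|\mathcal{F}|}$.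
   Context: $[n] = \{1,\ldots,n\}$. A family of sets is union-closed if it contains the union of any two of its members; the union-closed family generated by $\mathcal{G}$ is the smallest union-closed family containing $\mathcal{G}$. For a finite nonempty family $\mathcal{F} \subset \mathcal{P}(X)$ and $x \in X$, the abundance is $\gamma_x = |\{A \in \mathcal{F} : x \in A\}|/|\mathcal{F}|$. For $\mathcal{F} \neq \emptyset,\{\emptyset\}$, the average overlap density is $\mathrm{AOD}(\mathcal{F}) = \frac{1}{|\mathcal{F}\setminus\{\emptyset\}|}\sum_{A \in \mathcal{F}\setminus\{\emptyset\}} \frac{1}{|A|}\sum_{x \in A}\gamma_x$. *)

From Stdlib Require Import Reals.
From mathcomp Require Import all_boot all_order all_algebra.
From mathcomp Require Import Rstruct.
Set Implicit Arguments. Unset Strict Implicit. Unset Printing Implicit Defensive.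
Import Order.TTheory GRing.Theory Num.Theory.
Local Open Scope ring_scope.

Definition union_closed (T : finType) (F : {set {set T}}) : bool :=
  [forall A in F, forall B in F, (A :|: B) \in F].

Definition uc_gen (T : finType) (G : {set {set T}}) : {set {set T}} :=
  \bigcap_(H : {set {set T}} | union_closed H && (G \subset H)) H.

Definition abundance (T : finType) (F : {set {set T}}) (x : T) : R :=
  (#|[set A in F | x \in A]|%:R : R) / (#|F|%:R : R).

Definition AOD (T : finType) (F : {set {set T}}) : R :=
  ((#|F :\ set0|%:R : R)^-1) *
  \sum_(A in F :\ set0) ((#|A|%:R : R)^-1 * \sum_(x in A) abundance F x).

Definition avg_abundance (n : nat) (F : {set {set 'I_n}}) : R :=
  ((n%:R : R)^-1) * \sum_(x : 'I_n) abundance F x.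

Definition log2 (x : R) : R := ln x / ln 2%:R.

Definition block_family (m n : nat) (B Ts : 'I_m -> {set 'I_n})
  : {set {set 'I_n}} :=
  let Tall := \bigcup_(i : 'I_m) Ts i in
  uc_gen (\bigcup_(i : 'I_m) [set B i :|: [set t] | t in Tall]).

From Stdlib Require Import Reals.
From mathcomp Require Import all_boot all_order all_algebra.
From mathcomp Require Import Rstruct zify ring lra.
Set Implicit Arguments. Unset Strict Implicit. Unset Printing Implicit Defensive.
Import Order.TTheory GRing.Theory Num.Theory.

(* We show that all three quantities are
   Theta(1/m), which gives c = 1/8, C = 12 and m0 = 2.

   1. Structure of F.  Every member contains a whole block, and each of its
      points outside T lies in a block it contains (F_admissible); conversely
      B_i ∪ S ∈ F for every S ⊆ T (block_setU_in_F).
   2. Counting.  With K = 2^((m-1)s), between K and 2K members contain a given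
      block B_i (card_above_ge, card_above_le).  The upper bound encodes such a
      member by the other blocks it contains and by its trace on T \ B_i, and
      uses (2^s + 1)^m <= 2 * 2^(sm) when 2m <= 2^s.  Hence mK <= |F| <= 2mK.
   3. Abundances.  Every point has abundance >= 1/(2m), points outside T have
      abundance <= 2/m, and the ms points of T are negligible among the
      >= m^2 s points of a member or of [n]; so AOD(F) and the average
      abundance lie in [1/(2m), 3/m] (AOD_bounds, avg_abundance_bounds).
   4. Logarithms.  2^((m-1)s) <= |F| <= 2^(ms) and s = ceil(log2 m) + 2 give
      L in [1/(4m), 4/m] (log_ratio_bounds). *)

(* Binomial theorem over subsets: choose a or b for each element of I. *)
Lemma sum_subsets_pow (I : finType) (a b : nat) :
  \sum_(J : {set I}) a ^ #|~: J| * b ^ #|J| = (a + b) ^ #|I|.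
Proof.
have -> : (a + b) ^ #|I| = \prod_(i : I) \sum_(x : bool) (if x then b else a).
  rewrite (eq_bigr (fun _ => a + b)); last by move=> i _; rewrite big_bool /= addnC.
  by rewrite prod_nat_const.
rewrite bigA_distr_bigA (reindex (fun J : {set I} => [ffun i => i \in J])); last first.
  exists (fun f : {ffun I -> bool} => [set i | f i]) => [J _|f _].
    by apply/setP => i; rewrite inE ffunE.
  by apply/ffunP => i; rewrite ffunE inE.
apply: eq_bigr => J _; rewrite (bigID (mem J)) /= mulnC.
congr (_ * _).
  rewrite (eq_bigr (fun _ => b)) ?prod_nat_const // => i iJ.
  by rewrite ffunE iJ.
rewrite (eq_bigr (fun _ => a)) => [|i iJ]; last by rewrite ffunE (negbTE iJ).
by rewrite -prod_nat_const; apply: eq_bigl => i; rewrite inE.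
Qed.

Lemma pow_succ_mul_le (a j : nat) : j <= a -> (a + 1) ^ j * (a - j) <= a ^ j.+1.
Proof.
elim: j => [|j IH] ja; first by rewrite mul1n subn0 expn1.
have step : (a + 1) * (a - j.+1) <= a * (a - j) by nia.
rewrite expnS (mulnC (a + 1)) -mulnA (expnS a j.+1).
apply: leq_trans (leq_mul (leqnn _) step) _.
by rewrite mulnCA leq_mul2l IH ?orbT // ltnW.
Qed.

Lemma pow_succ_le_double (a k : nat) : 2 * k <= a -> (a + 1) ^ k <= 2 * a ^ k.
Proof.
move=> ka; have [a0|a_gt0] := posnP a; first by have -> : k = 0 by lia.
rewrite -(leq_pmul2r a_gt0) -mulnA -expnSr.
apply: leq_trans (leq_mul (leqnn _) (_ : a <= 2 * (a - k))) _; first lia.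
by rewrite mulnCA leq_mul2l pow_succ_mul_le ?orbT //; lia.
Qed.

Lemma sum_pow_card_compl_le (I : finType) (a : nat) : 2 * #|I| <= a ->
  \sum_(J : {set I}) a ^ #|~: J| <= 2 * a ^ #|I|.
Proof.
move=> Ia; apply: leq_trans (pow_succ_le_double Ia); rewrite -sum_subsets_pow.
by apply: eq_leq; apply: eq_bigr => J _; rewrite exp1n muln1.
Qed.

(* The sets lying between W and U, counted through R = W ∪ (R \ W). *)
Lemma card_between (I : finType) (W U : {set I}) : W \subset U ->
  #|[set R : {set I} | (W \subset R) && (R \subset U)]| = 2 ^ (#|U| - #|W|).
Proof.
move=> WU; have -> : [set R : {set I} | (W \subset R) && (R \subset U)]
    = (fun S => W :|: S) @: powerset (U :\: W).
  apply/setP => R; rewrite inE; apply/andP/imsetP => [[WR RU]|[S]].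
    exists (R :\: W); first by rewrite powersetE setSD.
    by apply/setP => x; rewrite !inE; case: (boolP (x \in W)) => // /(subsetP WR).
  rewrite powersetE => SUW ->; rewrite subsetUl subUset WU.
  by split; last exact: subset_trans SUW (subsetDl _ _).
rewrite card_in_imset ?card_powerset ?cardsD ?(setIidPr WU) // => S S'.
rewrite !powersetE => /subsetP SUW /subsetP S'UW E; apply/setP => x.
have /setP/(_ x) := E; rewrite !inE.
case: (boolP (x \in W)) => //= xW _.
have outside X : {subset X <= U :\: W} -> (x \in X) = false.
  by move=> XUW; apply/negbTE/negP => /XUW; rewrite inE xW.
by rewrite !outside.
Qed.

Lemma union_closedP (T : finType) (H : {set {set T}}) :
  union_closed H -> {in H &, forall A B, A :|: B \in H}.
Proof.
by move=> /forall_inP ucH A B AH BH; move/forall_inP: (ucH A AH); apply.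
Qed.

Lemma uc_gen_min (T : finType) (G H : {set {set T}}) :
  union_closed H -> G \subset H -> uc_gen G \subset H.
Proof. by move=> ucH GH; apply: bigcap_inf; rewrite ucH GH. Qed.

Lemma union_closed_setU (T : finType) (H : {set {set T}}) (X S : {set T}) :
  union_closed H -> S != set0 -> {in S, forall t, X :|: [set t] \in H} ->
  X :|: S \in H.
Proof.
move=> /union_closedP ucH; elim: {S}_.+1 {-2}S (ltnSn #|S|) => // k IH S Sk.
case/set0Pn=> t tS SH; have [S't0|S't] := eqVneq (S :\ t) set0.
  suff -> : S = [set t] by apply: SH.
  by apply/setP => x; have /setP/(_ x) := S't0; rewrite !inE; case: eqP => // ->.
have -> : X :|: S = (X :|: (S :\ t)) :|: (X :|: [set t]).
  apply/setP => x; rewrite !inE; case: (x =P t) => [->|_]; rewrite ?tS ?orbT //=.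
  by rewrite orbF orbAC orbb.
apply: ucH; last exact: SH.
apply: IH S't _ => [|x /setD1P[_ xS]]; last exact: SH.
by rewrite -ltnS (leq_trans _ Sk) // ltnS (cardsD1 t S) tS.
Qed.

Section RealEstimates.
Local Open Scope ring_scope.

Lemma mean_bounds (T : finType) (D : {set T}) (f : T -> R) (lo hi : R) :
  (0 < #|D|)%N -> (forall x, x \in D -> lo <= f x <= hi) ->
  lo <= #|D|%:R^-1 * \sum_(x in D) f x <= hi.
Proof.
move=> D_gt0 fD; have Dpos : 0 < (#|D|%:R : R) by rewrite ltr0n.
have sum_lo : \sum_(x in D) lo <= \sum_(x in D) f x.
  by apply: ler_sum => x /fD /andP[].
have sum_hi : \sum_(x in D) f x <= \sum_(x in D) hi.
  by apply: ler_sum => x /fD /andP[].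
rewrite sumr_const -mulr_natr mulrC in sum_lo.
rewrite sumr_const -mulr_natr mulrC in sum_hi.
by apply/andP; split; [rewrite ler_pdivlMl | rewrite ler_pdivrMl].
Qed.

Lemma abundance_le1 (T : finType) (F : {set {set T}}) (x : T) :
  abundance F x <= 1.
Proof.
rewrite /abundance RdivE; have [->|F_gt0] := posnP #|F|.
  by rewrite invr0 mulr0 ler01.
rewrite ler_pdivrMr ?ltr0n // mul1r ler_nat; apply: subset_leq_card.
by apply/subsetP => A; rewrite inE => /andP[].
Qed.

Lemma ler_ratio_nat (a b c d : nat) : (0 < b)%N -> (0 < d)%N ->
  (a * d <= c * b)%N -> a%:R / b%:R <= c%:R / d%:R :> R.
Proof.
move=> b_gt0 d_gt0 adcb.
by rewrite ler_pdivrMr ?ltr0n // mulrAC ler_pdivlMr ?ltr0n // -!natrM ler_nat.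
Qed.

Lemma ln_le_mono (x y : R) : 0 < x -> x <= y -> ln x <= ln y.
Proof.
move=> /RltP x_gt0; rewrite le_eqVlt => /orP[/eqP->//|/RltP xy].
exact/ltW/RltP/ln_increasing.
Qed.

Lemma ln2_gt0 : 0 < ln 2.
Proof. by apply: (@lt_trans _ _ 2^-1); [rewrite invr_gt0 | exact/RltP/ln_lt_2]. Qed.

Lemma ln_exp2 (a : nat) : ln (2 ^+ a) = a%:R * ln 2.
Proof. by rewrite -RpowE ln_pow ?INRE //; apply/RltP; rewrite ltr0n. Qed.

Lemma log2_ge (a : nat) (x : R) : 2 ^+ a <= x -> a%:R <= log2 x.
Proof.
move=> ax; rewrite /log2 ler_pdivlMr ?ln2_gt0 // -ln_exp2.
by apply: ln_le_mono ax; rewrite exprn_gt0.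
Qed.

Lemma log2_le (b : nat) (x : R) : 0 < x -> x <= 2 ^+ b -> log2 x <= b%:R.
Proof.
move=> x_gt0 xb; rewrite /log2 ler_pdivrMr ?ln2_gt0 // -ln_exp2.
exact: ln_le_mono xb.
Qed.

(* The bounds 2^((m-1)s) <= N <= 2^(ms) pin log2 N between (m-1)s and ms and
   log2 log2 N between s-2 and 2s; for s ~ log2 m this gives L ~ 1/m. *)
Lemma log_ratio_bounds (m s N : nat) : (1 < m)%N -> (2 < s)%N ->
  (2 ^ (s - 2) <= (m - 1) * s)%N -> (2 * m <= 2 ^ s)%N ->
  (2 ^ ((m - 1) * s) <= N <= 2 ^ (m * s))%N ->
  m%:R^-1 / 4 <= log2 (log2 N%:R) / log2 N%:R <= 4 / m%:R.
Proof.
move=> m_gt1 s_gt2 s_small m_small /andP[NL NU]; set Y := log2 N%:R.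
have N_gt0 : 0 < (N%:R : R) by rewrite ltr0n (leq_trans (expn_gt0 2 _) NL).
have Y_ge : ((m - 1) * s)%:R <= Y by apply: log2_ge; rewrite -natrX ler_nat.
have Y_le : Y <= (m * s)%:R by apply: log2_le; rewrite // -natrX ler_nat.
have Y_gt0 : 0 < Y.
  by apply: lt_le_trans Y_ge; rewrite ltr0n muln_gt0 subn_gt0 m_gt1 (leq_trans _ s_gt2).
have lY_ge : (s - 2)%:R <= log2 Y.
  by apply: log2_ge; apply: le_trans Y_ge; rewrite -natrX ler_nat.
have lY_le : log2 Y <= (2 * s)%:R.
  apply: log2_le Y_gt0 _; apply: le_trans Y_le _; rewrite -natrX ler_nat.
  rewrite mul2n -addnn expnD; apply: leq_mul; last exact: ltnW (ltn_expl _ (ltnSn 1)).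
  by rewrite (leq_trans _ m_small) // leq_pmull.
rewrite natrB ?(leq_trans _ s_gt2) // in lY_ge.
rewrite natrM natrB ?(ltnW m_gt1) // in Y_ge.
rewrite !natrM in Y_le lY_le.
have m_ge2 : 2 <= (m%:R : R) by rewrite ler_nat.
have s_ge3 : 3 <= (s%:R : R) by rewrite ler_nat.
set w := m%:R^-1.
have wm : w * m%:R = 1 by rewrite mulVf // gt_eqF // (lt_le_trans _ m_ge2).
have w_gt0 : 0 < w by rewrite invr_gt0 (lt_le_trans _ m_ge2).
rewrite ler_pdivlMr // ler_pdivrMr //.
have wY_le : w * Y <= w * (m%:R * s%:R) := ler_wpM2l (ltW w_gt0) Y_le.
rewrite mulrA wm mul1r in wY_le.
have wY_ge : w * ((m%:R - 1) * s%:R) <= w * Y := ler_wpM2l (ltW w_gt0) Y_ge.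
rewrite mulrA mulrBr wm mulr1 mulrBl mul1r in wY_ge.
have w_le : w <= 2^-1 by rewrite lef_pV2 ?posrE // (lt_le_trans _ m_ge2).
have ws_le : w * s%:R <= 2^-1 * s%:R by apply: ler_wpM2r; rewrite ?ler0n.
apply/andP; split; nra.
Qed.

End RealEstimates.

Section BlockFamily.
Variables (n m s : nat) (B Ts : 'I_m -> {set 'I_n}).
Hypothesis B_disjoint : forall i j, i != j -> [disjoint B i & B j].
Hypothesis Ts_sub : forall i, Ts i \subset B i.
Hypothesis card_Ts : forall i, #|Ts i| = s.
Hypothesis s_gt0 : 0 < s.

Local Notation T := (\bigcup_(i : 'I_m) Ts i).
Local Notation F := (block_family B Ts).

Lemma block_unique i j x : x \in B i -> x \in B j -> i = j.
Proof.
move=> xi xj; apply/eqP; apply: contraTT isT => /B_disjoint /disjointFr.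
by move=> /(_ x xi); rewrite xj.
Qed.

Definition admissible (A : {set 'I_n}) : bool :=
  [exists i, B i \subset A] &&
  [forall x in A, (x \in T) || [exists j, (x \in B j) && (B j \subset A)]].

Lemma admissible_setU A A' :
  admissible A -> admissible A' -> admissible (A :|: A').
Proof.
case/andP=> /existsP[i BiA] /forall_inP AT /andP[_ /forall_inP A'T].
apply/andP; split; first by apply/existsP; exists i; rewrite subsetU ?BiA.
apply/forall_inP => x /setUP[xA|xA'].
  case/orP: (AT x xA) => [->//|/existsP[j /andP[xj BjA]]].
  by apply/orP; right; apply/existsP; exists j; rewrite xj subsetU ?BjA.
case/orP: (A'T x xA') => [->//|/existsP[j /andP[xj BjA]]].
by apply/orP; right; apply/existsP; exists j; rewrite xj subsetU ?BjA ?orbT.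
Qed.

Lemma F_admissible A : A \in F -> admissible A.
Proof.
suff /subsetP FP : F \subset [set A' | admissible A'] by move=> /FP; rewrite inE.
apply: uc_gen_min.
  apply/forall_inP => A1; rewrite inE => adA1; apply/forall_inP => A2.
  by rewrite !inE; apply: admissible_setU.
apply/subsetP => _ /bigcupP[i _ /imsetP[t tT ->]]; rewrite inE.
apply/andP; split; first by apply/existsP; exists i; exact: subsetUl.
apply/forall_inP => x; rewrite !inE => /orP[xB|/eqP->]; last by rewrite tT.
by apply/orP; right; apply/existsP; exists i; rewrite xB subsetUl.
Qed.

Lemma F_contains_block A : A \in F -> exists i, B i \subset A.
Proof. by case/F_admissible/andP => /existsP. Qed.

Lemma F_outside_T A x : A \in F -> x \in A -> x \notin T ->
  exists2 j, x \in B j & B j \subset A.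
Proof.
case/F_admissible/andP=> _ /forall_inP AP xA xT.
by move: (AP x xA); rewrite (negbTE xT) => /existsP[j /andP[]]; exists j.
Qed.

Lemma block_setU_in_F i (S : {set 'I_n}) : S \subset T -> B i :|: S \in F.
Proof.
move=> ST; apply/bigcapP => H /andP[ucH genH].
have /set0Pn[t0 t0i] : Ts i != set0 by rewrite -card_gt0 card_Ts.
have -> : B i :|: S = B i :|: (t0 |: S).
  have t0B : [set t0] \subset B i by rewrite sub1set (subsetP (Ts_sub i)).
  by rewrite setUA (setUidPl t0B).
apply: union_closed_setU ucH _ _; first by apply/set0Pn; exists t0; rewrite setU11.
move=> t tS; apply: (subsetP genH); apply/bigcupP; exists i => //.
apply/imsetP; exists t => //; case/setU1P: tS => [->|/(subsetP ST)//].
by apply/bigcupP; exists i.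
Qed.

Definition W (J : {set 'I_m}) : {set 'I_n} := \bigcup_(j in J) Ts j.

Lemma card_W (J : {set 'I_m}) : #|W J| = #|J| * s.
Proof.
have -> : W J = \bigcup_j (if j \in J then Ts j else set0) by rewrite /W big_mkcond.
rewrite -sum1_card partition_disjoint_bigcup => [|i j ij]; last first.
  case: ifP => _; last by rewrite -setI_eq0 set0I.
  case: ifP => _; last by rewrite -setI_eq0 setI0.
  exact: disjointWl (Ts_sub i) (disjointWr (Ts_sub j) (B_disjoint ij)).
rewrite -sum_nat_const [RHS]big_mkcond; apply: eq_bigr => j _.
by case: ifP; rewrite sum1_card ?card_Ts ?cards0.
Qed.

Definition U (i : 'I_m) : {set 'I_n} := T :\: B i.

Lemma U_W i : U i = W (~: [set i]).
Proof.
apply/setP => x; rewrite inE; apply/andP/bigcupP => [[xBi /bigcupP[j _ xj]]|[j]].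
  exists j => //; rewrite !inE; apply: contraNneq xBi => <-.
  exact: (subsetP (Ts_sub j)).
rewrite !inE => ji xj; split; last by apply/bigcupP; exists j.
by apply: contraNN ji => /block_unique/(_ (subsetP (Ts_sub j) x xj)) ->.
Qed.

Lemma card_U i : #|U i| = (m - 1) * s.
Proof. by rewrite U_W card_W cardsC1 card_ord subn1. Qed.

Lemma W_sub_U i (J : {set 'I_m}) : i \notin J -> W J \subset U i.
Proof.
move=> iJ; rewrite U_W; apply/bigcupsP => j jJ; apply: (bigcup_max j) => //.
by rewrite !inE; apply: contraNneq iJ => <-.
Qed.

Definition above (i : 'I_m) : {set {set 'I_n}} := [set A in F | B i \subset A].

Lemma block_setU_inj i : {in powerset (U i) &, injective (fun S => B i :|: S)}.
Proof.
have drop_block (S : {set 'I_n}) : S \subset U i -> (B i :|: S) :\: B i = S.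
  move=> /subsetP SU; apply/setP => x; rewrite !inE.
  by case: (boolP (x \in B i)) => //= xB; apply/esym/negP => /SU; rewrite inE xB.
move=> S S'; rewrite !powersetE => SU S'U E.
by rewrite -(drop_block S SU) E drop_block.
Qed.

(* The sets B i :|: S with S \subset U i give 2^((m-1)s) members above B i. *)
Lemma card_above_ge i : 2 ^ ((m - 1) * s) <= #|above i|.
Proof.
rewrite -(card_U i) -card_powerset -(card_in_imset (@block_setU_inj i)).
apply: subset_leq_card; apply/subsetP => _ /imsetP[S SU ->]; rewrite powersetE in SU.
by rewrite inE subsetUl block_setU_in_F // (subset_trans SU) ?subsetDl.
Qed.

Lemma above_decomp i A : A \in above i ->
  A = B i :|: \bigcup_(j | (j != i) && (B j \subset A)) B j :|: (A :&: U i).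
Proof.
rewrite inE => /andP[AF BiA]; apply/setP => x; apply/idP/idP => [xA|]; last first.
  rewrite !inE => /orP[/orP[/(subsetP BiA)//|]|/andP[]//].
  by case/bigcupP=> j /andP[_ /subsetP]; apply.
rewrite !inE; case: (boolP (x \in B i)) => //= xBi.
case: (boolP (x \in T)) => [xT|xT]; first by apply/orP; right; apply/andP.
have [j xj BjA] := F_outside_T AF xA xT.
apply/orP; left; apply/bigcupP; exists j => //; rewrite BjA andbT.
by apply: contraNneq xBi => <-.
Qed.

(* Hence a member above B i is determined by its code: the other blocks it
   contains and its trace on U i.  Codes (J, R) satisfy i ∉ J and W J ⊆ R ⊆ U i. *)
Definition code (i : 'I_m) (A : {set 'I_n}) :=
  ([set j | (j != i) && (B j \subset A)], A :&: U i).

Definition codes (i : 'I_m) : {set {set 'I_m} * {set 'I_n}} :=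
  [set p : {set 'I_m} * {set 'I_n} |
     (i \notin p.1) && (W p.1 \subset p.2) && (p.2 \subset U i)].

Lemma code_inj i : {in above i &, injective (code i)}.
Proof.
move=> A A' Ai A'i [EJ EU]; rewrite (above_decomp Ai) (above_decomp A'i) EU.
by congr (_ :|: _ :|: _); apply: eq_bigl => j; have /setP/(_ j) := EJ; rewrite !inE.
Qed.

Lemma code_in_codes i A : A \in above i -> code i A \in codes i.
Proof.
rewrite /above /codes /code inE => /andP[_ BiA].
rewrite inE /= inE eqxx subsetIr andbT /=.
apply/bigcupsP => j; rewrite inE => /andP[ji BjA]; rewrite subsetI.
by rewrite (subset_trans (Ts_sub j) BjA) U_W (bigcup_max j) // !inE.
Qed.

(* Given the blocks J, the trace R ranges over the sets between W J and U i. *)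
Lemma card_codes i :
  #|codes i| = \sum_(J : {set 'I_m} | i \notin J) 2 ^ ((m - 1) * s - #|J| * s).
Proof.
transitivity (\sum_(J : {set 'I_m}) \sum_(R : {set 'I_n}) ((J, R) \in codes i : nat)).
  rewrite pair_big -sum1_card big_mkcond /=.
  by apply: eq_bigr => -[J R] _; case: (_ \in _).
rewrite [RHS]big_mkcond; apply: eq_bigr => J _ /=; case: (boolP (i \in J)) => iJ /=.
  by rewrite big1 // => R _; rewrite inE iJ.
rewrite -(card_U i) -card_W -card_between ?W_sub_U // -sum1_card [RHS]big_mkcond.
by apply: eq_bigr => R _; rewrite !inE iJ /=; case: (_ && _).
Qed.

(* Summing 2^(s(m-1-|J|)) over J ∌ i gives at most 2^(s(m-1)) (1 + 2^-s)^m,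
   which is at most twice 2^(s(m-1)) when 2m <= 2^s. *)
Lemma sum_codes_le i : 2 * m <= 2 ^ s ->
  \sum_(J : {set 'I_m} | i \notin J) 2 ^ ((m - 1) * s - #|J| * s) <=
  2 * 2 ^ ((m - 1) * s).
Proof.
move=> ms; rewrite -(leq_pmul2r (expn_gt0 2 s)) big_distrl -mulnA -expnD /=.
have m_gt0 : 0 < m := leq_ltn_trans (leq0n i) (ltn_ord i).
have -> : (m - 1) * s + s = s * m by rewrite -mulSnr subn1 prednK // mulnC.
rewrite expnM; have := sum_pow_card_compl_le (I := 'I_m) (a := 2 ^ s).
rewrite card_ord => /(_ ms); apply: leq_trans.
rewrite [X in _ <= X](bigID (fun J : {set 'I_m} => i \notin J)) /=.
apply: leq_trans (leq_addr _ _); apply: eq_leq; apply: eq_bigr => J iJ.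
have cJ : #|J| <= m - 1.
  have JCi : J \subset ~: [set i].
    by apply/subsetP => j jJ; rewrite !inE; apply: contraNneq iJ => <-.
  by have := subset_leq_card JCi; rewrite cardsC1 card_ord subn1.
have cCJ : #|~: J| = m - #|J| by have := cardsC J; rewrite card_ord; lia.
by rewrite -expnD -expnM cCJ -mulnBl -mulSnr mulnC -subSn // subn1 prednK.
Qed.

Lemma card_above_le i : 2 * m <= 2 ^ s -> #|above i| <= 2 * 2 ^ ((m - 1) * s).
Proof.
move=> ms; apply: leq_trans (sum_codes_le i ms); rewrite -card_codes.
rewrite -(card_in_imset (@code_inj i)); apply: subset_leq_card.
by apply/subsetP => _ /imsetP[A Ai ->]; exact: code_in_codes.
Qed.

(* Every member of F lies above some block. *)
Lemma card_F_le_sum : #|F| <= \sum_i #|above i|.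
Proof.
rewrite -sum1_card; apply: (@leq_trans (\sum_(A in F) \sum_i (B i \subset A : nat))).
  by apply: leq_sum => A /F_contains_block[i BiA]; rewrite (bigD1 i) //= BiA.
rewrite exchange_big; apply: leq_sum => i _.
rewrite -sum1_card [X in _ <= X]big_mkcond [X in X <= _]big_mkcond /=.
by apply: leq_sum => A _; rewrite /above inE; case: (A \in F); case: (B i \subset A).
Qed.

(* When the blocks are larger than the sets T_i, the families of sets B i ∪ S
   with S ⊆ U i are pairwise disjoint: a common member would contain a whole
   block inside T. *)
Lemma card_F_ge : (forall i, s < #|B i|) -> m * 2 ^ ((m - 1) * s) <= #|F|.
Proof.
move=> B_big; pose G i := (fun S => B i :|: S) @: powerset (U i).
have card_G i : #|G i| = 2 ^ ((m - 1) * s).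
  by rewrite card_in_imset ?card_powerset ?card_U //; exact: block_setU_inj.
have G_disjoint i j : i != j -> [disjoint G i & G j].
  move=> ij; rewrite -setI_eq0; apply/eqP/setP => A; rewrite !inE.
  apply/negbTE/negP => /andP[/imsetP[S SU ->] /imsetP[S' _ E]].
  suff /subset_leq_card : B j \subset Ts j by rewrite card_Ts leqNgt B_big.
  apply/subsetP => x xj; have : x \in B i :|: S by rewrite E inE xj.
  rewrite powersetE in SU; case/setUP => [xi|/(subsetP SU)].
    by move: ij; rewrite (block_unique xi xj) eqxx.
  rewrite inE => /andP[_ /bigcupP[l _ xl]].
  by rewrite -(block_unique (subsetP (Ts_sub l) x xl) xj).
apply: (@leq_trans #|\bigcup_i G i|).
  rewrite -sum1_card partition_disjoint_bigcup //.
  under eq_bigr => i _ do rewrite sum1_card card_G.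
  by rewrite sum_nat_const card_ord.
apply: subset_leq_card; apply/subsetP => _ /bigcupP[i _ /imsetP[S SU ->]].
by rewrite block_setU_in_F // -powersetE (subsetP _ S SU) // powersetS subsetDl.
Qed.

Lemma above_sub_mem i x : x \in B i -> above i \subset [set A in F | x \in A].
Proof.
by move=> xi; apply/subsetP => A; rewrite !inE => /andP[-> /subsetP/(_ x xi)].
Qed.

Lemma mem_sub_above i x : x \in B i -> x \notin T ->
  [set A in F | x \in A] \subset above i.
Proof.
move=> xi xT; apply/subsetP => A; rewrite !inE => /andP[AF xA]; rewrite AF.
by have [j xj BjA] := F_outside_T AF xA xT; rewrite (block_unique xi xj).
Qed.

Lemma card_T : #|T| = m * s.
Proof.
have -> : T = W setT by apply: eq_bigl => j; rewrite inE.
by rewrite card_W cardsT card_ord.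
Qed.

(* Size conditions, satisfied for s = ceil(log2 m) + 2 and |B i| = m^2 s. *)
Hypothesis m_gt1 : 1 < m.
Hypothesis B_large : forall i, m * (m * s) <= #|B i|.
Hypothesis m_small : 2 * m <= 2 ^ s.
Hypothesis B_cover : \bigcup_i B i = setT.

Local Notation K := (2 ^ ((m - 1) * s)).

Lemma card_F_bounds : m * K <= #|F| <= 2 * m * K.
Proof.
apply/andP; split.
  apply: card_F_ge => i; apply: leq_trans (B_large i).
  by rewrite mulnA -[X in X < _]mul1n ltn_pmul2r //; nia.
apply: leq_trans card_F_le_sum _.
apply: (@leq_trans (\sum_(i < m) 2 * K)).
  by apply: leq_sum => i _; exact: card_above_le.
by rewrite sum_nat_const card_ord mulnCA mulnA.
Qed.

Lemma card_F_gt0 : 0 < #|F|.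
Proof.
have /andP[FL _] := card_F_bounds.
by rewrite (leq_trans _ FL) // muln_gt0 expn_gt0 (ltnW m_gt1).
Qed.

Lemma card_F_pow_bounds : 2 ^ ((m - 1) * s) <= #|F| <= 2 ^ (m * s).
Proof.
have /andP[FL FU] := card_F_bounds; apply/andP; split.
  by apply: leq_trans FL; rewrite leq_pmull // ltnW.
apply: (leq_trans FU); apply: (leq_trans (leq_mul m_small (leqnn K))).
by rewrite -expnD addnC -mulSnr subn1 prednK // ltnW.
Qed.

Local Open Scope ring_scope.
Local Notation w := (m%:R^-1 : R).

(* Every point lies in a block, whose K members above it all contain it. *)
Lemma abundance_ge x : w / 2 <= abundance F x.
Proof.
have : x \in \bigcup_i B i by rewrite B_cover inE.
case/bigcupP=> i _ xi; have /andP[_ FU] := card_F_bounds.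
have K_le : (K <= #|[set A in F | x \in A]|)%N.
  exact: leq_trans (card_above_ge i) (subset_leq_card (above_sub_mem xi)).
have -> : w / 2 = 1%:R / (2 * m)%:R by rewrite natrM invfM mulrC mul1r.
rewrite /abundance RdivE; apply: (@ler_ratio_nat 1).
- by rewrite muln_gt0 (ltnW m_gt1).
- exact: card_F_gt0.
- by rewrite mul1n (leq_trans FU) // mulnC leq_mul2r K_le orbT.
Qed.

(* A point outside T lies only in members above its own block. *)
Lemma abundance_le x : abundance F x <= 2 * w + (x \in T)%:R.
Proof.
case: (boolP (x \in T)) => xT.
  by apply: le_trans (abundance_le1 F x) _; rewrite lerDr mulr_ge0 // invr_ge0 ler0n.
have : x \in \bigcup_i B i by rewrite B_cover inE.
case/bigcupP=> i _ xi; have /andP[FL _] := card_F_bounds.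
have c_le : (#|[set A in F | x \in A]| <= 2 * K)%N.
  exact: leq_trans (subset_leq_card (mem_sub_above xi xT)) (card_above_le i m_small).
rewrite addr0 /abundance RdivE; apply: (@ler_ratio_nat _ _ 2).
- exact: card_F_gt0.
- exact: ltnW.
- by rewrite mulnC (leq_trans (leq_mul (leqnn m) c_le)) // mulnCA leq_mul2l FL orbT.
Qed.

Lemma mean_abundance_bounds (D : {set 'I_n}) : (m * (m * s) <= #|D|)%N ->
  w / 2 <= #|D|%:R^-1 * \sum_(x in D) abundance F x <= 3 * w.
Proof.
move=> D_large; have D_gt0 : (0 < #|D|)%N.
  by rewrite (leq_trans _ D_large) // !muln_gt0 s_gt0 ltnW.
have D_pos : 0 < #|D|%:R :> R by rewrite ltr0n.
apply/andP; split.
  have := @mean_bounds _ D (abundance F) (w / 2) 1 D_gt0.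
  by case/(_ _)/andP => // x _; rewrite abundance_ge abundance_le1.
have sum_le : \sum_(x in D) abundance F x <= 2 * w * #|D|%:R + (m * s)%:R.
  apply: le_trans (_ : \sum_(x in D) (2 * w + (x \in T)%:R) <= _).
    by apply: ler_sum => x _; exact: abundance_le.
  rewrite big_split /= sumr_const -[(2 * w) *+ _]mulr_natr lerD2l.
  rewrite -card_T -natr_sum ler_nat.
  rewrite -sum1_card [X in (_ <= X)%N]big_mkcond [X in (X <= _)%N]big_mkcond /=.
  by apply: leq_sum => x _; case: (x \in D); case: (x \in T).
apply: le_trans (ler_wpM2l _ sum_le) _; first by rewrite invr_ge0 ltW.
rewrite mulrDr mulrCA mulVf ?gt_eqF // mulr1.
suff : #|D|%:R^-1 * (m * s)%:R <= w by lra.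
rewrite mulrC -[w]mul1r; apply: (@ler_ratio_nat _ _ 1) => //; first exact: ltnW.
by rewrite mul1n mulnC.
Qed.

Definition block0 : 'I_m := Ordinal (ltnW m_gt1).

(* Every nonempty member contains a block, so has at least m^2 s points. *)
Lemma AOD_bounds : w / 2 <= AOD F <= 3 * w.
Proof.
have B0 : B block0 \in F :\ set0.
  rewrite !inE -(setU0 (B block0)) block_setU_in_F ?sub0set // andbT setU0.
  by rewrite -card_gt0 (leq_trans _ (B_large _)) // !muln_gt0 s_gt0 ltnW.
apply: mean_bounds; first by rewrite card_gt0; apply/set0Pn; exists (B block0).
move=> A; rewrite !inE => /andP[_ /F_contains_block[i BiA]].
apply: mean_abundance_bounds.
exact: leq_trans (B_large i) (subset_leq_card BiA).
Qed.

(* The ground set [n] contains a block, so has at least m^2 s points. *)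
Lemma avg_abundance_bounds : w / 2 <= avg_abundance F <= 3 * w.
Proof.
have := @mean_abundance_bounds [set: 'I_n].
rewrite cardsT card_ord /avg_abundance.
have -> : \sum_(x in [set: 'I_n]) abundance F x = \sum_x abundance F x.
  by apply: eq_bigl => x; rewrite inE.
apply; rewrite -[n]card_ord -cardsT (leq_trans (B_large block0)) //.
exact: subset_leq_card (subsetT _).
Qed.

End BlockFamily.

Lemma up_log_size m : 1 < m -> let s := up_log 2 m + 2 in
  [/\ 2 < s, 2 ^ (s - 2) <= (m - 1) * s & 2 * m <= 2 ^ s].
Proof.
move=> m_gt1 s; have u_gt0 : 0 < up_log 2 m by rewrite up_log_gt0 m_gt1.
have m_le : m <= 2 ^ up_log 2 m := up_logP m (isT : 1 < 2).
have lt_m : 2 ^ (up_log 2 m).-1 < m := up_log_gtn (isT : 1 < 2) m_gt1.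
have pow_u : 2 ^ up_log 2 m = 2 * 2 ^ (up_log 2 m).-1 by rewrite -expnS prednK.
split; first by rewrite /s addn2.
  rewrite /s addnK pow_u; nia.
by rewrite /s expnD mulnC; apply: leq_mul.
Qed.

Local Open Scope ring_scope.

Theorem mainTheorem4 :
  exists (c C : R), 0 < c /\ 0 < C /\
  exists m0 : nat, forall m : nat, (m0 <= m)%N ->
    forall (B Ts : 'I_m -> {set 'I_(m ^ 2 * (up_log 2 m + 2) * m)}),
      (* the B_i partition [n] into blocks of size k = m^2 s *)
      (forall i j : 'I_m, i != j -> [disjoint B i & B j]) ->
      (\bigcup_(i : 'I_m) B i = setT) ->
      (forall i : 'I_m, #|B i| = (m ^ 2 * (up_log 2 m + 2))%N) ->
      (* T_i subset of B_i with |T_i| = s *)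
      (forall i : 'I_m, Ts i \subset B i) ->
      (forall i : 'I_m, #|Ts i| = (up_log 2 m + 2)%N) ->
      let F := block_family B Ts in
      let L := log2 (log2 (#|F|%:R)) / log2 (#|F|%:R) in
      (c * L <= AOD F <= C * L) /\ (c * L <= avg_abundance F <= C * L).
Proof.
exists (8^-1), 12; split; [lra | split; first lra].
exists 2%N => m m_gt1 B Ts B_disj B_cover card_B Ts_sub card_Ts F L.
have [s_gt2 s_pow m_small] := up_log_size m_gt1.
have s_gt0 : (0 < up_log 2 m + 2)%N by rewrite addn2.
have B_large i : (m * (m * (up_log 2 m + 2)) <= #|B i|)%N.
  by rewrite card_B mulnA mulnn.
have /andP[A1 A2] := AOD_bounds B_disj Ts_sub card_Ts s_gt0 m_gt1 B_large m_small B_cover.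
have /andP[V1 V2] :=
  avg_abundance_bounds B_disj Ts_sub card_Ts s_gt0 m_gt1 B_large m_small B_cover.
have /andP[L1 L2] := log_ratio_bounds m_gt1 s_gt2 s_pow m_small
  (card_F_pow_bounds B_disj Ts_sub card_Ts s_gt0 m_gt1 B_large m_small).
rewrite -/F -/L in L1 L2 A1 A2 V1 V2.
by split; apply/andP; split; lra.
Qed.
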